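(* Let $n,m$ be integers with $0<m<n$. Then for every $k=1,\ldots,n$ and $x\in[-1,1]$, $$\tilde\varphi_{n,k}^m(x)=\sqrt{\frac{\pi}{n}}\sum_{h=1}^n\left[\sum_{r=0}^{n-1}\frac{p_r(x_k^n)p_r(x_h^n)}{\sqrt{\nu_{n,r}^m}}\right]\Phi_{n,h}^m(x).$$
   Context: The orthonormal Chebyshev polynomials are $p_0(x)=\sqrt{1/\pi}$ and $p_r(x)=\sqrt{2/\pi}\cos(r\arccos x)$ for $r\ge1$, $x\in[-1,1]$. The Chebyshev nodes are $x_k^n=\cos\frac{(2k-1)\pi}{2n}$, $k=1,\ldots,n$. For $0<m<n$ set $\mu_{n,r}^m=1$ if $0\le r\le n-m$, $\mu_{n,r}^m=\frac{m+n-r}{2m}$ if $n-m<r<n+m$, and $\mu_{n,r}^m=0$ otherwise. The interpolating VP scaling functions are $\Phi_{n,k}^m(x)=\frac{\pi}{n}\sum_{r=0}^{n+m-1}\mu_{n,r}^m p_r(x_k^n)p_r(x)$, $k=1,\ldots,n$. For $r=0,\ldots,n-1$ define $q_{n,r}^m=p_r$ if $0\le r\le n-m$, and $q_{n,r}^m=\mu_{n,r}^m p_r-\mu_{n,2n-r}^m p_{2n-r}$ if $n-m<r<n$; set $\nu_{n,r}^m=1$ if $0\le r\le n-m$ and $\nu_{n,r}^m=\frac{m^2+(n-r)^2}{2m^2}$ if $n-m<r<n$. The orthonormal VP scaling functions are $\tilde\varphi_{n,k}^m(x)=\sum_{r=0}^{n-1}\sqrt{\frac{\pi}{n\,\nu_{n,r}^m}}\,p_r(x_k^n)\,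 q_{n,r}^m(x)$, $k=1,\ldots,n$. *)

From Stdlib Require Import Reals.
Open Scope R_scope.

Fixpoint bsum (N : nat) (f : nat -> R) : R :=
  match N with O => 0 | S N' => bsum N' f + f N' end.

Definition cheb_p (r : nat) (x : R) : R :=
  match r with
  | O => sqrt (1 / PI)
  | _ => sqrt (2 / PI) * cos (INR r * acos x)
  end.

Definition cheb_node (n k : nat) : R :=
  cos ((2 * INR k - 1) * PI / (2 * INR n)).

Definition mu (n m r : nat) : R :=
  if (r <=? n - m)%nat then 1
  else if (r <? n + m)%nat then (INR m + INR n - INR r) / (2 * INR m)
  else 0.

Definition nu (n m r : nat) : R :=
  if (r <=? n - m)%nat then 1
  else (INR m ^ 2 + (INR n - INR r) ^ 2) / (2 * INR m ^ 2).

Definition q (n m r : nat) (x : R) : R :=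
  if (r <=? n - m)%nat then cheb_p r x
  else mu n m r * cheb_p r x - mu n m (2 * n - r) * cheb_p (2 * n - r) x.

Definition Phi (n m k : nat) (x : R) : R :=
  PI / INR n * bsum (n + m) (fun r => mu n m r * cheb_p r (cheb_node n k) * cheb_p r x).

Definition phi_tilde (n m k : nat) (x : R) : R :=
  bsum n (fun r => sqrt (PI / (INR n * nu n m r)) * cheb_p r (cheb_node n k) * q n m r x).

From Stdlib Require Import Reals Lra Lia.
Open Scope R_scope.

(* Everything rests on the discrete orthogonality of the Chebyshev polynomials
   at the nodes x_{h+1} = cos t_h, t_h = (2h+1) pi / (2n): for r < n and s < 2n,
     (pi/n) sum_h p_r(x_{h+1}) p_s(x_{h+1}) = delta_{r,s} - delta_{2n-r,s}.
   By the product-to-sum formula this reduces to sum_h cos (d t_h), which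
   telescopes against 2 sin (d pi / (2n)) and so vanishes unless 2n divides d;
   the term delta_{2n-r,s} is the aliasing p_{2n-r} = - p_r at the nodes.
   Expanding Phi_{n,h}^m, orthogonality gives sum_h p_r(x_h) Phi_{n,h}^m = q_{n,r}^m
   for r < n, and the theorem follows by exchanging the two finite sums. *)

Lemma bsum_ext N f g : (forall i, (i < N)%nat -> f i = g i) -> bsum N f = bsum N g.
Proof.
  induction N as [|N IH]; simpl; intros Hfg; [reflexivity|].
  rewrite IH by (intros; apply Hfg; lia). rewrite Hfg by lia. reflexivity.
Qed.

Lemma bsum_add N f g : bsum N (fun i => f i + g i) = bsum N f + bsum N g.
Proof. induction N as [|N IH]; simpl; [ring|]. rewrite IH; ring. Qed.

Lemma bsum_sub N f g : bsum N (fun i => f i - g i) = bsum N f - bsum N g.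
Proof. induction N as [|N IH]; simpl; [ring|]. rewrite IH; ring. Qed.

Lemma bsum_scal_l N c f : bsum N (fun i => c * f i) = c * bsum N f.
Proof. induction N as [|N IH]; simpl; [ring|]. rewrite IH; ring. Qed.

Lemma bsum_scal_r N c f : bsum N (fun i => f i * c) = bsum N f * c.
Proof. induction N as [|N IH]; simpl; [ring|]. rewrite IH; ring. Qed.

Lemma bsum_const N c : bsum N (fun _ => c) = INR N * c.
Proof. induction N as [|N IH]; simpl bsum; [simpl; ring|]. rewrite IH, S_INR; ring. Qed.

Lemma bsum_swap N M f :
  bsum N (fun i => bsum M (fun j => f i j)) = bsum M (fun j => bsum N (fun i => f i j)).
Proof.
  induction N as [|N IH]; simpl.
  - induction M as [|M IHM]; simpl; [reflexivity|]. rewrite <- IHM; ring.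
  - rewrite IH, bsum_add; reflexivity.
Qed.

Lemma bsum_delta N j f :
  bsum N (fun s => f s * (if (j =? s)%nat then 1 else 0)) = if (j <? N)%nat then f j else 0.
Proof.
  induction N as [|N IH]; simpl; [reflexivity|]. rewrite IH.
  destruct (Nat.eqb_spec j N), (Nat.ltb_spec j N), (Nat.ltb_spec j (S N));
    subst; try lia; ring.
Qed.

Lemma sum_cos_odd_multiples n a :
  2 * sin a * bsum n (fun h => cos ((2 * INR h + 1) * a)) = sin (2 * INR n * a).
Proof.
  induction n as [|n IH]; simpl bsum.
  - simpl. replace (2 * 0 * a) with 0 by ring. rewrite sin_0; ring.
  - rewrite Rmult_plus_distr_l, IH, S_INR.
    replace (2 * (INR n + 1) * a) with ((2 * INR n + 1) * a + a) by ring.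
    replace (2 * INR n * a) with ((2 * INR n + 1) * a - a) at 1 by ring.
    rewrite sin_plus, sin_minus; ring.
Qed.

Lemma Z_not_divide_between (N c d : Z) : (c * N < d < (c + 1) * N)%Z -> ~ (N | d)%Z.
Proof.
  intros Hd [e ->]. assert (0 < N)%Z by lia.
  destruct (Z.le_gt_cases e c); nia.
Qed.

Definition cheb_angle (n h : nat) : R := (2 * INR h + 1) * PI / (2 * INR n).

Lemma sum_cos_cheb_angle_vanish n (d : Z) :
  (0 < n)%nat -> ~ (Z.of_nat (2 * n) | d)%Z ->
  bsum n (fun h => cos (IZR d * cheb_angle n h)) = 0.
Proof.
  intros Hn Hd. assert (0 < INR n) by (apply lt_0_INR; lia). pose proof PI_RGT_0.
  set (a := IZR d * PI / (2 * INR n)).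
  rewrite (bsum_ext _ _ (fun h => cos ((2 * INR h + 1) * a)))
    by (intros; unfold cheb_angle, a; f_equal; field; lra).
  assert (Hsin : sin a <> 0).
  { intros Hs. apply sin_eq_0_0 in Hs as [c Hc]. apply Hd. exists c.
    apply eq_IZR. rewrite mult_IZR, <- INR_IZR_INZ, mult_INR. simpl INR.
    apply (Rmult_eq_reg_r PI); [|lra].
    replace (IZR d * PI) with (a * (2 * INR n)) by (unfold a; field; lra).
    rewrite Hc; ring. }
  assert (Hsin2n : sin (2 * INR n * a) = 0).
  { apply sin_eq_0_1. exists d. unfold a. field. lra. }
  pose proof (sum_cos_odd_multiples n a) as E. rewrite Hsin2n in E.
  apply Rmult_integral in E as [E|E]; [lra|exact E].
Qed.

Lemma sum_cos_cheb_angle_zero n : bsum n (fun h => cos (IZR 0 * cheb_angle n h)) = INR n.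
Proof.
  rewrite (bsum_ext _ _ (fun _ => 1)) by (intros; rewrite Rmult_0_l; apply cos_0).
  rewrite bsum_const; ring.
Qed.

Lemma cos_cheb_angle_double n h : (0 < n)%nat -> cos (2 * INR n * cheb_angle n h) = -1.
Proof.
  intros Hn. assert (0 < INR n) by (apply lt_0_INR; lia).
  replace (2 * INR n * cheb_angle n h) with (PI + 2 * INR h * PI)
    by (unfold cheb_angle; field; lra).
  rewrite cos_period; apply cos_PI.
Qed.

Lemma cheb_angle_bounds n h : (h < n)%nat -> 0 <= cheb_angle n h <= PI.
Proof.
  intros Hh. pose proof PI_RGT_0. pose proof (pos_INR h).
  assert (INR h + 1 <= INR n) by (rewrite <- S_INR; apply le_INR; lia).
  unfold cheb_angle. split.
  - apply Rmult_le_pos; [nra|]. left; apply Rinv_0_lt_compat; lra.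
  - apply (Rmult_le_reg_r (2 * INR n)); [lra|]. field_simplify; [nra|lra].
Qed.

Definition cheb_coef (r : nat) : R := if (r =? 0)%nat then sqrt (1 / PI) else sqrt (2 / PI).

Lemma cheb_coef0_sqr : cheb_coef 0 * cheb_coef 0 = 1 / PI.
Proof. apply sqrt_sqrt. pose proof PI_RGT_0. left; apply Rdiv_lt_0_compat; lra. Qed.

Lemma cheb_coef_mul r s : r <> 0%nat -> s <> 0%nat -> cheb_coef r * cheb_coef s = 2 / PI.
Proof.
  intros Hr Hs. unfold cheb_coef.
  destruct (Nat.eqb_spec r 0), (Nat.eqb_spec s 0); try lia.
  apply sqrt_sqrt. pose proof PI_RGT_0. left; apply Rdiv_lt_0_compat; lra.
Qed.

Lemma cheb_p_node n h r : (h < n)%nat ->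
  cheb_p r (cheb_node n (S h)) = cheb_coef r * cos (INR r * cheb_angle n h).
Proof.
  intros Hh. assert (0 < INR n) by (apply lt_0_INR; lia).
  assert (Hnode : cheb_node n (S h) = cos (cheb_angle n h))
    by (unfold cheb_node, cheb_angle; rewrite S_INR; f_equal; field; lra).
  rewrite Hnode. unfold cheb_p, cheb_coef. destruct r as [|r]; simpl Nat.eqb.
  - simpl INR. rewrite Rmult_0_l, cos_0; ring.
  - rewrite acos_cos by (apply cheb_angle_bounds; exact Hh). reflexivity.
Qed.

Lemma cheb_p_nodes_orthogonal n r s : (r < n)%nat -> (s < 2 * n)%nat ->
  PI / INR n * bsum n (fun h => cheb_p r (cheb_node n (S h)) * cheb_p s (cheb_node n (S h)))
  = (if (r =? s)%nat then 1 else 0) - (if (2 * n - r =? s)%nat then 1 else 0).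
Proof.
  intros Hr Hs. assert (0 < INR n) by (apply lt_0_INR; lia). pose proof PI_RGT_0.
  set (dm := (Z.of_nat r - Z.of_nat s)%Z). set (dp := Z.of_nat (r + s)).
  rewrite (bsum_ext _ _ (fun h => cheb_coef r * cheb_coef s / 2 *
      (cos (IZR dm * cheb_angle n h) + cos (IZR dp * cheb_angle n h)))).
  2:{ intros h Hh. rewrite !cheb_p_node by exact Hh.
      unfold dm, dp. rewrite minus_IZR, <- !INR_IZR_INZ, plus_INR.
      rewrite Rmult_minus_distr_r, Rmult_plus_distr_r, cos_minus, cos_plus. field. }
  rewrite bsum_scal_l, bsum_add.
  destruct (Nat.eqb_spec r s) as [<-|Hrs].
  - destruct (Nat.eqb_spec (2 * n - r) r); [lia|].
    assert (Hdm : dm = 0%Z) by (unfold dm; lia). rewrite Hdm, sum_cos_cheb_angle_zero.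
    destruct (Nat.eqb_spec r 0) as [->|Hr0].
    + assert (Hdp : dp = 0%Z) by reflexivity.
      rewrite Hdp, sum_cos_cheb_angle_zero, cheb_coef0_sqr. field; lra.
    + rewrite (sum_cos_cheb_angle_vanish n dp)
        by (try lia; apply (Z_not_divide_between _ 0); unfold dp; lia).
      rewrite cheb_coef_mul by exact Hr0. field; lra.
  - rewrite (sum_cos_cheb_angle_vanish n dm).
    2: lia.
    2:{ destruct (Nat.lt_ge_cases r s); [apply (Z_not_divide_between _ (-1))|
          apply (Z_not_divide_between _ 0)]; unfold dm; lia. }
    destruct (Nat.eqb_spec (2 * n - r) s) as [Hs2|Hs2].
    + assert (Hdp : IZR dp = 2 * INR n)
        by (unfold dp; rewrite <- INR_IZR_INZ, <- Hs2, plus_INR, minus_INR, mult_INR by lia;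
            simpl INR; ring).
      rewrite Hdp.
      rewrite (bsum_ext _ _ (fun _ => -1)) by (intros; apply cos_cheb_angle_double; lia).
      rewrite bsum_const, cheb_coef_mul by lia. field; lra.
    + rewrite (sum_cos_cheb_angle_vanish n dp).
      2: lia.
      2:{ destruct (Nat.lt_ge_cases (r + s) (2 * n)); [apply (Z_not_divide_between _ 0)|
            apply (Z_not_divide_between _ 1)]; unfold dp; lia. }
      ring.
Qed.

Lemma mu_low n m r : (r <= n - m)%nat -> mu n m r = 1.
Proof. intros Hr. unfold mu. apply Nat.leb_le in Hr. rewrite Hr. reflexivity. Qed.

Lemma cheb_p_nodes_Phi n m r x : (m < n)%nat -> (r < n)%nat ->
  bsum n (fun h => cheb_p r (cheb_node n (S h)) * Phi n m (S h) x) = q n m r x.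
Proof.
  intros Hmn Hr. unfold Phi.
  rewrite (bsum_ext _ _ (fun h => bsum (n + m) (fun s => mu n m s * cheb_p s x *
      (PI / INR n * (cheb_p r (cheb_node n (S h)) * cheb_p s (cheb_node n (S h))))))).
  2:{ intros h _. rewrite <- !bsum_scal_l. apply bsum_ext; intros; ring. }
  rewrite bsum_swap.
  rewrite (bsum_ext _ _ (fun s => mu n m s * cheb_p s x * (if (r =? s)%nat then 1 else 0)
      - mu n m s * cheb_p s x * (if (2 * n - r =? s)%nat then 1 else 0))).
  2:{ intros s Hs. rewrite bsum_scal_l, bsum_scal_l, cheb_p_nodes_orthogonal by lia. ring. }
  rewrite bsum_sub, !bsum_delta.
  unfold q.
  destruct (Nat.ltb_spec r (n + m)), (Nat.leb_spec r (n - m)),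
    (Nat.ltb_spec (2 * n - r) (n + m)); try lia.
  - rewrite mu_low by lia. ring.
  - ring.
Qed.

Lemma nu_pos n m r : (0 < m)%nat -> 0 < nu n m r.
Proof.
  intros Hm. assert (Hm0 : 0 < INR m) by (apply lt_0_INR; lia).
  unfold nu. destruct (r <=? n - m)%nat; [lra|].
  pose proof (pow_lt (INR m) 2 Hm0). pose proof (pow2_ge_0 (INR n - INR r)).
  apply Rdiv_lt_0_compat; lra.
Qed.

Theorem proposition2 (n m k : nat) (x : R) :
  (0 < m)%nat -> (m < n)%nat -> (1 <= k <= n)%nat -> -1 <= x <= 1 ->
  phi_tilde n m k x =
  sqrt (PI / INR n) *
  bsum n (fun h' =>
    bsum n (fun r => cheb_p r (cheb_node n k) * cheb_p r (cheb_node n (S h'))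
                     / sqrt (nu n m r))
    * Phi n m (S h') x).
Proof.
  (* The identity holds for every k and x; only the bounds on m are needed. *)
  intros Hm Hmn _ _. pose proof PI_RGT_0. assert (0 < INR n) by (apply lt_0_INR; lia).
  rewrite (bsum_ext _ _ (fun h => bsum n (fun r => cheb_p r (cheb_node n k) / sqrt (nu n m r)
      * (cheb_p r (cheb_node n (S h)) * Phi n m (S h) x)))).
  2:{ intros h _. rewrite <- bsum_scal_r. apply bsum_ext; intros; unfold Rdiv; ring. }
  rewrite bsum_swap. unfold phi_tilde. rewrite <- bsum_scal_l.
  apply bsum_ext. intros r Hr.
  rewrite bsum_scal_l, cheb_p_nodes_Phi by lia.
  replace (PI / (INR n * nu n m r)) with (PI / INR n / nu n m r)
    by (pose proof (nu_pos n m r Hm); field; lra).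
  rewrite sqrt_div_alt by (apply nu_pos; exact Hm).
  unfold Rdiv; ring.
Qed.
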